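(* Let $G$ be a locally compact group. Then the Braconnier modular function $\mathrm{mod}_{\mathbb R\times G}:\mathrm{Aut}(\mathbb R\times G)\to(0,\infty)$ is an open map.
   Context: $\mathrm{Aut}(H)$ is the group of bicontinuous automorphisms of a locally compact group $H$ with the Braconnier topology, whose neighbourhood basis at $\mathrm{id}_H$ is given by $\mathcal N(K,U)=\{\alpha:\alpha(x)x^{-1}\in U,\ \alpha^{-1}(x)x^{-1}\in U\ \forall x\in K\}$, $K$ compact, $U$ an identity neighbourhood. The Braconnier modular function is defined by $\mu(\alpha(S))=\mathrm{mod}_H(\alpha)\mu(S)$ for a left Haar measure $\mu$ and Borel sets $S$; it is a continuous homomorphism into the multiplicative group $(0,\infty)$. *)

From HB Require Import structures.
From mathcomp Require Import all_boot all_order all_algebra.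
From mathcomp Require Import all_classical all_reals all_analysis.
Set Implicit Arguments. Unset Strict Implicit. Unset Printing Implicit Defensive.
Import Order.TTheory GRing.Theory Num.Theory.
Import numFieldNormedType.Exports.
Local Open Scope classical_set_scope.
Local Open Scope ring_scope.

Definition is_lc_group (G : ptopologicalType)
    (mul : G -> G -> G) (inv : G -> G) (one : G) : Prop :=
  (forall x y z, mul x (mul y z) = mul (mul x y) z) /\
  (forall x, mul one x = x /\ mul x one = x) /\
  (forall x, mul (inv x) x = one /\ mul x (inv x) = one) /\
  continuous (fun p : G * G => mul p.1 p.2) /\ continuous inv /\
  hausdorff_space G /\
  (forall x : G, exists K : set G, compact K /\ nbhs x K).

Section Product.
Variables (R : realType) (G : ptopologicalType).
Variables (mul : G -> G -> G) (inv : G -> G) (one : G).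

Definition pmul (p q : R * G) : R * G := (p.1 + q.1, mul p.2 q.2).
Definition pinv (p : R * G) : R * G := (- p.1, inv p.2).
Definition pone : R * G := (0, one).

Definition pborel : set (set (R * G)) := <<s [set U : set (R * G) | open U] >>.

Definition pborelType := g_sigma_algebraType [set U : set (R * G) | open U].

Definition is_aut (a : R * G -> R * G) : Prop :=
  (forall x y, a (pmul x y) = pmul (a x) (a y)) /\
  exists b : R * G -> R * G,
    [/\ cancel a b, cancel b a, continuous a & continuous b].

(* Membership in the basic identity neighbourhood N(K,U) of Aut(R x G). *)
Definition in_N (K U : set (R * G)) (a : R * G -> R * G) : Prop :=
  exists b : R * G -> R * G,
    [/\ cancel a b, cancel b a &
        forall x, K x -> U (pmul (a x) (pinv x)) /\ U (pmul (b x) (pinv x))].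

(* Open sets of Aut(R x G) for the Braconnier topology: the group topology
   whose neighbourhood basis at the identity is given by the N(K,U). *)
Definition braconnier_open (A : set (R * G -> R * G)) : Prop :=
  A `<=` is_aut /\
  forall a, A a -> exists (K U : set (R * G)),
    [/\ compact K, nbhs pone U &
        forall c, is_aut c -> in_N K U c -> A (a \o c)].

Definition left_haar (mu : {measure set pborelType -> \bar R}) : Prop :=
  [/\ (forall (x : R * G) (S : set (R * G)), pborel S ->
         mu (pmul x @` S) = mu S),
      (forall K : set (R * G), compact K -> (mu K < +oo)%E),
      (forall U : set (R * G), open U -> U !=set0 -> (0 < mu U)%E),
      (forall S : set (R * G), pborel S ->
         mu S = ereal_inf [set mu U | U in [set U : set (R * G) | open U /\ S `<=` U]]) &
      (forall U : set (R * G), open U ->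
         mu U = ereal_sup [set mu K | K in [set K : set (R * G) | compact K /\ K `<=` U]])].

Definition is_braconnier_mod (mu : {measure set pborelType -> \bar R})
    (modf : (R * G -> R * G) -> R) : Prop :=
  forall a, is_aut a ->
    0 < modf a /\
    forall S : set (R * G), pborel S -> mu (a @` S) = ((modf a)%:E * mu S)%E.

End Product.

From Pilot Require Import Defs.
From HB Require Import structures.
From mathcomp Require Import all_boot all_order all_algebra.
From mathcomp Require Import all_classical all_reals all_analysis.
From mathcomp Require Import lra.
Set Implicit Arguments. Unset Strict Implicit. Unset Printing Implicit Defensive.
Import Order.TTheory GRing.Theory Num.Theory.
Import numFieldNormedType.Exports.
Local Open Scope classical_set_scope.
Local Open Scope ring_scope.

(* The scalings (x, g) |-> (t x, g), t > 0, are automorphisms of R x G that tend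
   to the identity in the Braconnier topology as t -> 1, so a \o scale t stays in
   any open set of automorphisms containing a.  For a compact identity
   neighbourhood K of G, the Haar measure of the strip [0, t) x K is additive
   (by left invariance) and monotone in t, hence linear; therefore
   mod (a \o scale t) = t * mod a, which sweeps out a neighbourhood of mod a. *)

Lemma natr_bounded_norm_eq0 (R : archiRealFieldType) (d C : R) :
  (forall n : nat, (0 < n)%N -> n%:R * `|d| <= C) -> d = 0.
Proof.
move=> bounded; apply/normr0_eq0/eqP; rewrite eq_le normr_ge0 andbT.
rewrite leNgt; apply/negP => d_gt0.
have := truncnS_gt (C / `|d|); rewrite ltr_pdivrMr // => C_lt.
by have := bounded _ (ltn0Sn (Num.Def.trunc (C / `|d|))); rewrite leNgt C_lt.
Qed.

Section AdditiveNondecreasing.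
Variables (R : archiRealFieldType) (F : R -> R).
Hypothesis F_additive : forall s t, 0 <= s -> 0 <= t -> F (s + t) = F s + F t.
Hypothesis F_nondecreasing : forall s t, 0 <= s -> s <= t -> F s <= F t.

Let F0 : F 0 = 0.
Proof. by have := F_additive (lexx 0) (lexx 0); rewrite addr0; lra. Qed.

Let F_natrM (n : nat) x : 0 <= x -> F (n%:R * x) = n%:R * F x.
Proof.
move=> x_ge0; elim: n => [|n IHn]; first by rewrite !mul0r F0.
by rewrite -natr1 !mulrDl !mul1r F_additive ?IHn // mulr_ge0.
Qed.

Lemma additive_nondecreasing_linear t : 0 <= t -> F t = t * F 1.
Proof.
move=> t_ge0; apply/eqP; rewrite -subr_eq0; apply/eqP.
apply: (natr_bounded_norm_eq0 (C := F 1)) => n n_gt0.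
have n_pos : 0 < n%:R :> R by rewrite ltr0n.
have F_inv_n : n%:R * F n%:R^-1 = F 1 by rewrite -F_natrM ?mulfV ?lt0r_neq0.
pose k := Num.Def.trunc (n%:R * t).
have k_le : k%:R <= n%:R * t by rewrite truncn_le mulr_ge0.
have k_gt : n%:R * t < k.+1%:R by exact: truncnS_gt.
have F_frac (m : nat) : n%:R * F (m%:R / n%:R) = m%:R * F 1.
  by rewrite F_natrM ?invr_ge0 // mulrCA F_inv_n.
have lower : k%:R * F 1 <= n%:R * F t.
  rewrite -F_frac ler_pM2l //; apply: F_nondecreasing; first exact: divr_ge0.
  by rewrite ler_pdivrMr // mulrC.
have upper : n%:R * F t <= k.+1%:R * F 1.
  rewrite -F_frac ler_pM2l //; apply: F_nondecreasing => //.
  by rewrite ler_pdivlMr // mulrC ltW.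
rewrite -natr1 in k_gt upper.
have F1_ge0 : 0 <= F 1 by rewrite -F0 F_nondecreasing.
by rewrite -[n%:R]normr_nat -normrM ler_norml; apply/andP; split; nra.
Qed.

End AdditiveNondecreasing.

Section BorelProduct.
Variables (R : realType) (G : ptopologicalType).

Lemma pborel_closed (A : set (R * G)) : closed A -> pborel A.
Proof.
move=> A_closed; rewrite -(setCK A); apply: (@measurableC _ (pborelType R G)).
by apply: sub_sigma_algebra; rewrite /= openC.
Qed.

Lemma pborel_setX (X : set R) (K : set G) : closed X -> closed K -> pborel (X `*` K).
Proof.
move=> X_closed K_closed; apply: pborel_closed.
by apply: closedI; apply: preimage_closed => // p _; [exact: cvg_fst|exact: cvg_snd].
Qed.

Definition strip (K : set G) (t : R) : set (R * G) :=
  [set p | 0 <= p.1 /\ p.1 < t /\ K p.2].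

Lemma strip_setD (K : set G) t :
  strip K t = [set x | 0 <= x] `*` K `\` [set x | t <= x] `*` K.
Proof.
apply/seteqP; split=> -[x y] /=.
  by case=> /= x_ge0 [x_lt Ky]; split=> [//|[t_le _]]; lra.
case=> -[x_ge0 Ky] not_t_le; do 2!split=> //.
by rewrite ltNge; apply/negP => t_le; exact: not_t_le.
Qed.

Lemma pborel_strip (K : set G) t : closed K -> pborel (strip K t).
Proof.
move=> K_closed; rewrite strip_setD.
by apply: (@measurableD _ (pborelType R G)); apply: pborel_setX => //; exact: closed_ge.
Qed.

End BorelProduct.

Section StripMeasure.
Variables (R : realType) (G : ptopologicalType) (mul : G -> G -> G) (one : G).
Variables (mu : {measure set (pborelType R G) -> \bar R}) (K : set G).
Hypothesis mul1g : left_id one mul.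
Hypothesis mu_translate :
  forall (x : R * G) (S : set (R * G)), pborel S -> mu (pmul mul x @` S) = mu S.
Hypothesis mu_compact_lty : forall C : set (R * G), compact C -> (mu C < +oo)%E.
Hypothesis mu_open_gt0 : forall U : set (R * G), open U -> U !=set0 -> (0 < mu U)%E.
Hypothesis G_hausdorff : hausdorff_space G.
Hypothesis K_compact : compact K.

Let K_closed : closed K := compact_closed G_hausdorff K_compact.

Let measurable_strip (t : R) : measurable (strip K t : set (pborelType R G)) :=
  pborel_strip t K_closed.
Local Hint Resolve measurable_strip : core.

Lemma strip_translate (s t : R) : 0 <= s ->
  pmul mul (s, one) @` strip K t = strip K (s + t) `\` strip K s.
Proof.
move=> s_ge0; apply/seteqP; split.
  move=> _ [[x y] [/= x_ge0 [x_lt Ky]] <-]; rewrite /pmul /= mul1g.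
  split=> [|[/= _ [x_lt_s _]]]; last lra.
  by split=> /=; [|split=> //]; lra.
move=> [x y] [[/= x_ge0 [x_lt Ky]] not_lt_s].
exists (x - s, y); last by rewrite /pmul /= mul1g subrKC.
split=> /=; last by split=> //; lra.
by rewrite subr_ge0 leNgt; apply/negP => x_lt_s; exact: not_lt_s.
Qed.

Lemma le_strip_measure (s t : R) : s <= t -> (mu (strip K s) <= mu (strip K t))%E.
Proof.
move=> le_st; apply: le_measure; rewrite ?inE //.
by move=> [x y] /= [x_ge0 [x_lt Ky]]; do 2!split=> //; exact: lt_le_trans le_st.
Qed.

Lemma strip_measure_additive (s t : R) : 0 <= s -> 0 <= t ->
  mu (strip K (s + t)) = (mu (strip K s) + mu (strip K t))%E.
Proof.
move=> s_ge0 t_ge0.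
have sub_st : strip K s `<=` strip K (s + t).
  by move=> [x y] /= [x_ge0 [x_lt Ky]]; do 2!split=> //; lra.
rewrite -(setDUK sub_st) measureU ?setDIK //; last exact: measurableD.
by rewrite -(mu_translate (s, one) (measurable_strip t)) strip_translate.
Qed.

Lemma strip_measure_fin_num (t : R) : mu (strip K t) \is a fin_num.
Proof.
rewrite ge0_fin_numE ?measure_ge0 //.
have box_compact : compact (`[0, `|t|]%classic `*` K).
  by apply: compact_setX => //; exact: segment_compact.
apply: le_lt_trans (mu_compact_lty box_compact).
apply: le_measure; rewrite ?inE //.
  by apply: pborel_setX => //; exact: interval_closed.
move=> [x y] /= [x_ge0 [x_lt Ky]]; split=> //=.
by rewrite in_itv /= x_ge0 (le_trans (ltW x_lt)) // ler_norm.
Qed.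

Lemma strip_measure_gt0 : nbhs one K -> (0 < mu (strip K 1))%E.
Proof.
move=> K_one.
pose O := fst @^-1` [set x : R | 0 < x] `&` fst @^-1` [set x | x < 1] `&` snd @^-1` K°.
have O_open : open O.
  have fst_open A : open A -> open (@fst R G @^-1` A).
    by apply: open_comp => // p _; exact: cvg_fst.
  have snd_open A : open A -> open (@snd R G @^-1` A).
    by apply: open_comp => // p _; exact: cvg_snd.
  apply: openI; [apply: openI; apply: fst_open|apply: snd_open].
  - exact: open_gt.
  - exact: open_lt.
  - exact: open_interior.
apply: lt_le_trans (mu_open_gt0 O_open _) _.
  by exists (2^-1, one); do 2?split => //=; lra.
apply: le_measure; rewrite ?inE //; first exact: sub_sigma_algebra.
move=> [x y] [[/= x_gt0 x_lt1] Ky].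
by split; [exact: ltW|split=> //; exact: interior_subset].
Qed.

Lemma strip_measure_linear : nbhs one K ->
  exists2 r : R, 0 < r & forall t, 0 <= t -> mu (strip K t) = (t * r)%:E.
Proof.
move=> K_one; pose F t := fine (mu (strip K t)).
have F_additive s t : 0 <= s -> 0 <= t -> F (s + t) = F s + F t.
  move=> s_ge0 t_ge0.
  by rewrite /F strip_measure_additive // fineD ?strip_measure_fin_num.
have F_nondecreasing s t : 0 <= s -> s <= t -> F s <= F t.
  by move=> _ le_st; rewrite /F fine_le ?strip_measure_fin_num ?le_strip_measure.
exists (F 1).
  by rewrite /F fine_gt0 // strip_measure_gt0 // ltey_eq strip_measure_fin_num.
move=> t t_ge0; rewrite -(additive_nondecreasing_linear F_additive F_nondecreasing t_ge0).
by rewrite /F fineK ?strip_measure_fin_num.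
Qed.

End StripMeasure.

Section Scaling.
Variables (R : realType) (G : ptopologicalType).
Variables (mul : G -> G -> G) (inv : G -> G) (one : G).

Definition scale (t : R) (p : R * G) : R * G := (t * p.1, p.2).

Lemma scaleK (t : R) : t != 0 -> cancel (scale t) (scale t^-1).
Proof. by move=> t_neq0 [x y]; rewrite /scale /= mulKf. Qed.

Lemma scaleKV (t : R) : t != 0 -> cancel (scale t^-1) (scale t).
Proof. by move=> t_neq0 [x y]; rewrite /scale /= mulVKf. Qed.

Lemma continuous_scale (t : R) : continuous (scale t).
Proof.
move=> p; apply: (@cvg_pair _ _ _ _ (nbhs (t * p.1)) (nbhs p.2)); last exact: cvg_snd.
by apply: cvgMr; exact: cvg_fst.
Qed.

Lemma scale_pmul (t : R) : {morph scale t : p q / pmul mul p q}.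
Proof. by move=> [x y] [x' y']; rewrite /scale /pmul /= mulrDr. Qed.

Lemma is_aut_scale (t : R) : t != 0 -> is_aut mul (scale t).
Proof.
move=> t_neq0; split; first exact: scale_pmul.
by exists (scale t^-1); split; [exact: scaleK|exact: scaleKV|exact: continuous_scale..].
Qed.

Lemma is_aut_comp (a c : R * G -> R * G) :
  is_aut mul a -> is_aut mul c -> is_aut mul (a \o c).
Proof.
move=> [a_pmul [a' [aK a'K a_cont a'_cont]]] [c_pmul [c' [cK c'K c_cont c'_cont]]].
split=> [p q|]; first by rewrite /= c_pmul a_pmul.
exists (c' \o a'); split=> [p|p|p|p] /=; first by rewrite aK cK.
- by rewrite c'K a'K.
- exact: continuous_comp (c_cont p) (a_cont (c p)).
- exact: continuous_comp (a'_cont p) (c'_cont (a' p)).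
Qed.

Lemma scale_strip (K : set G) (t : R) : 0 < t -> scale t @` strip K 1 = strip K t.
Proof.
move=> t_gt0; have t_neq0 := lt0r_neq0 t_gt0.
apply/seteqP; split=> [_ [[x y] [/= x_ge0 [x_lt1 Ky]] <-]|[x y] [/= x_ge0 [x_lt Ky]]].
  split=> /=; first exact: mulr_ge0 (ltW t_gt0) x_ge0.
  by split=> //; nra.
exists (scale t^-1 (x, y)); last exact: scaleKV.
split=> /=; first by rewrite mulr_ge0 // invr_ge0 ltW.
by split=> //; rewrite mulrC ltr_pdivrMr // mul1r.
Qed.

Hypothesis mulgV : forall x, mul x (inv x) = one.

(* [Defs.pinv]: a bare [pinv] denotes the pseudo-inverse of mathcomp-classical. *)
Lemma pmul_scale_pinv (t : R) (p : R * G) :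
  pmul mul (scale t p) (Defs.pinv inv p) = ((t - 1) * p.1, one).
Proof. by rewrite /pmul /scale /pinv /= mulgV mulrBl mul1r. Qed.

Lemma near_scale_in_N (K U : set (R * G)) : compact K -> nbhs (pone R one) U ->
  \forall t \near (1 : R), in_N mul inv K U (scale t).
Proof.
move=> K_compact U_one.
have [B [B_ge0 K_bounded]] : exists B : R, 0 <= B /\ forall p, K p -> `|p.1| <= B.
  have fstK_compact : compact (fst @` K).
    by apply: continuous_compact => //; apply: continuous_subspaceT => p; exact: cvg_fst.
  have [M [_ M_bound]] := compact_bounded fstK_compact.
  exists (Num.max 0 (M + 1)); split=> [|p Kp]; first by rewrite le_max lexx.
  by rewrite le_max (M_bound (M + 1)) ?ltrDl ?orbT //; exists p.
have [e e_gt0 U_line] : exists2 e : R, 0 < e & forall s, `|s| < e -> U (s, one).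
  have line_cvg : (fun s : R => (s, one)) @ 0 --> pone R one.
    apply: (@cvg_pair _ _ _ _ (nbhs (0 : R)) (nbhs one)); first exact: cvg_id.
    exact: cvg_cst.
  have /nbhs_normP [e e_gt0 e_ball] := line_cvg _ U_one.
  by exists e => // s s_lt; apply: e_ball; rewrite /ball_ /= sub0r normrN.
have small_in_U p (v : R) : K p -> `|v| < e / (B + 1) -> U (v * p.1, one).
  move=> Kp v_small; apply: U_line; rewrite normrM.
  have := K_bounded p Kp; rewrite ltr_pdivlMr ?ltr_wpDl // in v_small.
  by have := normr_ge0 v; nra.
have inv_cvg : (fun t : R => t^-1) @ (1 : R) --> (1 : R).
  by rewrite -[X in _ --> X]invr1; exact: inv_continuous (oner_neq0 R).
have eB_gt0 : 0 < e / (B + 1) by rewrite divr_gt0 // ltr_wpDl.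
near=> t.
have t_neq0 : t != 0 by apply: lt0r_neq0; near: t; exact: lt_nbhsr.
exists (scale t^-1); split=> [|p|p Kp]; [exact: scaleK|exact: scaleKV|].
rewrite !pmul_scale_pinv; split; apply: (small_in_U _ _ Kp); rewrite distrC; near: t.
- exact: cvgr_dist_lt cvg_id _ eB_gt0.
- exact: cvgr_dist_lt inv_cvg _ eB_gt0.
Unshelve. all: by end_near.
Qed.

End Scaling.

Section ScaleModulus.
Variables (R : realType) (G : ptopologicalType) (mul : G -> G -> G).
Variables (mu : {measure set (pborelType R G) -> \bar R}) (modf : (R * G -> R * G) -> R).
Hypothesis modfP : is_braconnier_mod mul mu modf.
Variables (K : set G) (r : R).
Hypotheses (K_closed : closed K) (r_gt0 : 0 < r).
Hypothesis mu_strip : forall t, 0 <= t -> mu (strip K t) = (t * r)%:E.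

Lemma modf_comp_scale a t : is_aut mul a -> 0 < t -> modf (a \o scale t) = t * modf a.
Proof.
move=> a_aut t_gt0.
have ac_aut := is_aut_comp a_aut (is_aut_scale mul (lt0r_neq0 t_gt0)).
have := (modfP ac_aut).2 _ (pborel_strip 1 K_closed).
rewrite -image_comp scale_strip // ((modfP a_aut).2 _ (pborel_strip t K_closed)).
rewrite !mu_strip ?ler01 ?ltW // mul1r -!EFinM mulrA.
by move=> [] /(mulIf (lt0r_neq0 r_gt0)) <-; rewrite mulrC.
Qed.

End ScaleModulus.

Theorem lemma2p7 (R : realType) (G : ptopologicalType)
    (mul : G -> G -> G) (inv : G -> G) (one : G)
    (hG : is_lc_group mul inv one)
    (mu : {measure set (pborelType R G) -> \bar R})
    (hmu : left_haar mul mu)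
    (modf : (R * G -> R * G) -> R)
    (hmod : is_braconnier_mod mul mu modf) :
  forall A : set (R * G -> R * G),
    braconnier_open mul inv one A -> open (modf @` A).
Proof.
have [_ [mul1g_mulg1 [mulVg_mulgV [_ [_ [G_hausdorff G_lc]]]]]] := hG.
have [mu_translate mu_compact_lty mu_open_gt0 _ _] := hmu.
have [K0 [K0_compact K0_one]] := G_lc one.
have [r r_gt0 mu_strip] := strip_measure_linear (fun x => (mul1g_mulg1 x).1)
  mu_translate mu_compact_lty mu_open_gt0 G_hausdorff K0_compact K0_one.
have K0_closed := compact_closed G_hausdorff K0_compact.
move=> A [A_aut A_open]; rewrite openE => _ [a Aa <-].
have [K [U [K_compact U_one scale_in_A]]] := A_open a Aa.
have moda_gt0 := (hmod a (A_aut a Aa)).1.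
have div_cvg : (fun z => z / modf a) @ modf a --> (1 : R).
  by rewrite -[X in _ --> X](mulfV (lt0r_neq0 moda_gt0)); apply: cvgMl; exact: cvg_id.
have scale_near := near_scale_in_N (fun x => (mulVg_mulgV x).2) K_compact U_one.
have near1 : \forall t \near (1 : R), 0 < t /\ in_N mul inv K U (scale t).
  exact: filterI (lt_nbhsr ltr01) scale_near.
have near_moda : \forall z \near modf a,
    0 < z / modf a /\ in_N mul inv K U (scale (z / modf a)) := div_cvg _ near1.
apply: filterS near_moda => z [t_gt0 t_in_N].
exists (a \o scale (z / modf a)).
  exact: scale_in_A (is_aut_scale mul (lt0r_neq0 t_gt0)) t_in_N.
rewrite (modf_comp_scale hmod K0_closed r_gt0 mu_strip (A_aut a Aa) t_gt0).
by rewrite divfK ?lt0r_neq0.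
Qed.
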